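(* Fix an integer $k\ge2$ and let $w$ and $\widetilde w$ be as in the context. Then for all $x\in\mathbb R$, $$Mw(x)\le\frac92\,\widetilde w(x).$$
   Context: All intervals are half-open, $[a,b)$. $Mf(x)=\sup_{I\ni x}\frac1{|I|}\int_I|f|$ over intervals $I\ni x$. Fix an integer $k\ge2$, $\varepsilon=3^{-k}$, $p=\frac{1}{3\varepsilon}\Big(\frac{1+\varepsilon}{2}+\frac{4\varepsilon^2}{1+\varepsilon}\Big)$, $u=\sqrt p+\sqrt{p-1}$. For an interval $I$: $I_\pm$ its left/right halves; $I_m$ ($0\le m\le k-1$) the interval with the same right endpoint as $I$ and length $3^{-m}|I|$; $J^{(i)}$ ($i=1,2,3$) the $i$-th from the left of the three equal thirds of $J$. For $\omega\sigma=p$: $w_0(\omega,\sigma,I)=\frac{\omega}{\sqrt p}(u\chi_{I_-}+u^{-1}\chi_{I_+})$ and, for $\nu\ge1$, $w_\nu(\omega,\sigma,I)=\frac{\omega}{p}\big(\sum_{m=0}^{k-2}\chi_{I_m^{(1)}}+\chi_{I_{k-1}^{(1)}\cup I_{k-1}^{(2)}}+\frac{4\varepsilon}{1+\varepsilon}\chi_{I_{k-1}^{(3)}}\big)+\sum_{m=0}^{k-2}w_{\nu-1}(2\omega,\frac\sigma2,I_m^{(2)})$. Let $n=3^{k-1}$ and let $w$ be the $1$-periodic extension of $w_n(1,p,[0,1))$ to $\mathbb R$. Carrying: each $[j,j+1)$, $j\in\mathbb Z$, carries $w_n$; if $I$ carries $w_\nu$ with $\nu\ge1$, then each $I_m^{(2)}$,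 $0\le m\le k-2$, carries $w_{\nu-1}$. $\operatorname{supp}w_\nu$ denotes the union of all intervals carrying $w_\nu$. Define the $1$-periodic function $\widetilde w=\sum_{l=1}^n2^l\chi_{\operatorname{supp}w_{n-(l-1)}\setminus\operatorname{supp}w_{n-l}}+2^{n+1}\chi_{\operatorname{supp}w_0}$. *)

From Stdlib Require Import Reals Lra ClassicalEpsilon.
Open Scope R_scope.

Definition ind (P : Prop) : R :=
  if excluded_middle_informative P then 1 else 0.

(** Half-open intervals [c,d) are represented by their endpoints (c,d). *)
Definition chi (c d : R) (x : R) : R := ind (c <= x < d).

Fixpoint sumR (N : nat) (f : nat -> R) : R :=
  match N with
  | O => 0
  | S N' => sumR N' f + f N'
  end.

Definition eps (k : nat) : R := / (3 ^ k).
Definition pp (k : nat) : R :=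
  / (3 * eps k) * ((1 + eps k) / 2 + 4 * (eps k) ^ 2 / (1 + eps k)).
Definition uu (k : nat) : R := sqrt (pp k) + sqrt (pp k - 1).

(** For I = [a,b): I_m = [b - 3^{-m}(b-a), b) (left endpoint; right is b). *)
Definition Im_left (m : nat) (a b : R) : R := b - (b - a) / 3 ^ m.
Definition third_l (i : nat) (c d : R) : R := c + (INR i - 1) * (d - c) / 3.
Definition third_r (i : nat) (c d : R) : R := c + INR i * (d - c) / 3.

Definition chi_mi (m i : nat) (a b : R) (x : R) : R :=
  chi (third_l i (Im_left m a b) b) (third_r i (Im_left m a b) b) x.

Fixpoint wnu (k : nat) (nu : nat) (om sg a b : R) (x : R) : R :=
  match nu with
  | O =>
      om / sqrt (pp k) *
        (uu k * chi a ((a + b) / 2) x + / uu k * chi ((a + b) / 2) b x)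
  | S nu' =>
      om / pp k *
        ( sumR (k - 1) (fun m => chi_mi m 1 a b x)
        + ind ( (third_l 1 (Im_left (k-1) a b) b <= x
                   < third_r 1 (Im_left (k-1) a b) b)
              \/ (third_l 2 (Im_left (k-1) a b) b <= x
                   < third_r 2 (Im_left (k-1) a b) b) )
        + 4 * eps k / (1 + eps k) * chi_mi (k-1) 3 a b x )
      + sumR (k - 1) (fun m =>
          wnu k nu' (2 * om) (sg / 2)
              (third_l 2 (Im_left m a b) b) (third_r 2 (Im_left m a b) b) x)
  end.

Definition nn (k : nat) : nat := (3 ^ (k - 1))%nat.

Definition w (k : nat) (x : R) : R :=
  wnu k (nn k) 1 (pp k) 0 1 (frac_part x).

(** [c,d) is reached from [a,b) after d steps of the carrying rule
    (I carries w_nu, nu>=1  ==>  each I_m^{(2)}, 0<=m<=k-2, carries w_{nu-1}). *)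
Fixpoint descendant (k : nat) (depth : nat) (a b c d : R) : Prop :=
  match depth with
  | O => c = a /\ d = b
  | S depth' => exists m : nat, (m <= k - 2)%nat /\
      descendant k depth' (third_l 2 (Im_left m a b) b)
                          (third_r 2 (Im_left m a b) b) c d
  end.

(** [c,d) carries w_nu: descends from some [j,j+1) (which carries w_n)
    in n - nu steps. *)
Definition carries (k nu : nat) (c d : R) : Prop :=
  (nu <= nn k)%nat /\
  exists j : Z, descendant k (nn k - nu) (IZR j) (IZR j + 1) c d.

Definition in_supp (k nu : nat) (x : R) : Prop :=
  exists c d, carries k nu c d /\ c <= x < d.

Definition wtilde (k : nat) (x : R) : R :=
  sumR (nn k) (fun l' =>
    let l := S l' in
    2 ^ l * ind (in_supp k (nn k - (l - 1)) x /\ ~ in_supp k (nn k - l) x))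
  + 2 ^ (S (nn k)) * ind (in_supp k 0 x).

(* Write W_nu(om, I) for w_nu(om, sigma, I). Its own part is at most
   2 om and vanishes on the children I_m^(2), where W_(nu-1)(2 om, .) lives, and W_nu has
   average exactly om on I. Hence W_nu averages at most 3 om over every subinterval of I that
   shares an endpoint with I: near the left end W_nu <= 2 om, near the right end one inducts
   over the children.
   Now let x be in I and let r be the number of generations of carrying intervals below I that
   contain x. Induction on nu bounds the average of W_nu over any interval containing x by
   9 2^r om: the child containing x carries twice the weight but one generation less, the other
   children meet the interval at one of their endpoints. By periodicity w obeys the same bound
   around x, the cells other than the one of x contributing averages at most 3, and
   w~(x) >= 2^(r+1). *)

(* Coquelicot is loaded first, since it would shadow [ind] from Defs. *)
From Coquelicot Require Import Coquelicot.
From Stdlib Require Import Reals Lra Lia Classical ClassicalEpsilon.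
From Pilot Require Import Defs.
Open Scope R_scope.

Lemma ind_true (P : Prop) : P -> ind P = 1.
Proof. intro H; unfold ind; destruct (excluded_middle_informative P); tauto. Qed.

Lemma ind_false (P : Prop) : ~ P -> ind P = 0.
Proof. intro H; unfold ind; destruct (excluded_middle_informative P); tauto. Qed.

Lemma ind_bounds (P : Prop) : 0 <= ind P <= 1.
Proof. unfold ind; destruct (excluded_middle_informative P); lra. Qed.

Lemma ind_iff (P Q : Prop) : (P <-> Q) -> ind P = ind Q.
Proof.
  intros H; destruct (classic P).
  - rewrite !ind_true; tauto.
  - rewrite !ind_false; tauto.
Qed.

Lemma ind_or_disjoint (P Q : Prop) : (P -> ~ Q) -> ind (P \/ Q) = ind P + ind Q.
Proof.
  intros H; destruct (classic P), (classic Q); try tauto.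
  - rewrite (ind_true (P \/ Q)), (ind_true P), (ind_false Q); tauto || lra.
  - rewrite (ind_true (P \/ Q)), (ind_false P), (ind_true Q); tauto || lra.
  - rewrite !ind_false; tauto || lra.
Qed.

Lemma chi_in c d y : c <= y < d -> chi c d y = 1.
Proof. apply ind_true. Qed.

Lemma chi_out c d y : ~ (c <= y < d) -> chi c d y = 0.
Proof. apply ind_false. Qed.

Lemma chi_bounds c d y : 0 <= chi c d y <= 1.
Proof. apply ind_bounds. Qed.

Lemma chi_shift c d s y : chi (c + s) (d + s) (y + s) = chi c d y.
Proof. apply ind_iff; lra. Qed.

Lemma chi_adjacent_le_1 l m r y : chi l m y + chi m r y <= 1.
Proof.
  destruct (classic (l <= y < m)).
  - rewrite chi_in, (chi_out m) by lra. lra.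
  - rewrite chi_out by auto. pose proof (chi_bounds m r y). lra.
Qed.

Lemma sumR_ext N f g : (forall i, (i < N)%nat -> f i = g i) -> sumR N f = sumR N g.
Proof.
  induction N as [|N IH]; intros H; simpl; [reflexivity|].
  rewrite (H N), IH by (try intros; try apply H; lia). reflexivity.
Qed.

Lemma sumR_le N f g : (forall i, (i < N)%nat -> f i <= g i) -> sumR N f <= sumR N g.
Proof.
  induction N as [|N IH]; intros H; simpl; [lra|].
  assert (f N <= g N) by (apply H; lia).
  assert (sumR N f <= sumR N g) by (apply IH; intros; apply H; lia). lra.
Qed.

Lemma sumR_minus N f g : sumR N (fun i => f i - g i) = sumR N f - sumR N g.
Proof. induction N; simpl; [|rewrite IHN]; lra. Qed.

Lemma sumR_scal N c f : sumR N (fun i => c * f i) = c * sumR N f.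
Proof. induction N; simpl; [|rewrite IHN]; lra. Qed.

Lemma sumR_const N c : sumR N (fun _ => c) = INR N * c.
Proof. induction N; simpl sumR; [simpl|rewrite IHN, S_INR]; lra. Qed.

Lemma sumR_nonneg N f : (forall i, (i < N)%nat -> 0 <= f i) -> 0 <= sumR N f.
Proof.
  intros H. apply Rle_trans with (sumR N (fun _ => 0)).
  - rewrite sumR_const; lra.
  - apply sumR_le; auto.
Qed.

Lemma sumR_zero N f : (forall i, (i < N)%nat -> f i = 0) -> sumR N f = 0.
Proof. intros H. rewrite (sumR_ext N f (fun _ => 0)), sumR_const by auto. lra. Qed.

Lemma sumR_single N f m :
  (m < N)%nat -> (forall i, (i < N)%nat -> i <> m -> f i = 0) -> sumR N f = f m.
Proof.
  induction N as [|N IH]; intros Hm H; simpl; [lia|].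
  destruct (Nat.eq_dec m N) as [->|ne].
  - rewrite sumR_zero by (intros; apply H; lia). lra.
  - rewrite IH, (H N) by (lia || (intros; apply H; lia)). lra.
Qed.

Lemma sumR_ge_term N f i :
  (forall j, (j < N)%nat -> 0 <= f j) -> (i < N)%nat -> f i <= sumR N f.
Proof.
  induction N as [|N IH]; intros H Hi; simpl; [lia|].
  assert (0 <= f N) by (apply H; lia).
  destruct (Nat.eq_dec i N) as [->|ne].
  - assert (0 <= sumR N f) by (apply sumR_nonneg; intros; apply H; lia). lra.
  - assert (f i <= sumR N f) by (apply IH; [intros; apply H|]; lia). lra.
Qed.

(** * Integrals of step functions *)

(* Coquelicot's linearity lemmas restated with Rplus and Rmult, so that they rewrite and
   feed lra. *)
Lemma ex_RInt_Rplus (f g : R -> R) a b :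
  ex_RInt f a b -> ex_RInt g a b -> ex_RInt (fun y => f y + g y) a b.
Proof. exact (ex_RInt_plus f g a b). Qed.

Lemma ex_RInt_Rminus (f g : R -> R) a b :
  ex_RInt f a b -> ex_RInt g a b -> ex_RInt (fun y => f y - g y) a b.
Proof. exact (ex_RInt_minus f g a b). Qed.

Lemma ex_RInt_Rscal (f : R -> R) l a b : ex_RInt f a b -> ex_RInt (fun y => l * f y) a b.
Proof. exact (ex_RInt_scal f a b l). Qed.

Lemma RInt_Rplus (f g : R -> R) a b : ex_RInt f a b -> ex_RInt g a b ->
  RInt (fun y => f y + g y) a b = RInt f a b + RInt g a b.
Proof. exact (RInt_plus f g a b). Qed.

Lemma RInt_Rminus (f g : R -> R) a b : ex_RInt f a b -> ex_RInt g a b ->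
  RInt (fun y => f y - g y) a b = RInt f a b - RInt g a b.
Proof. exact (RInt_minus f g a b). Qed.

Lemma RInt_Rscal (f : R -> R) l a b : ex_RInt f a b -> RInt (fun y => l * f y) a b = l * RInt f a b.
Proof. exact (RInt_scal f a b l). Qed.

Lemma RInt_Rconst (v a b : R) : RInt (fun _ => v) a b = (b - a) * v.
Proof. exact (RInt_const a b v). Qed.

Lemma RInt_Rpoint (f : R -> R) a : RInt f a a = 0.
Proof. exact (RInt_point a f). Qed.

Lemma RInt_RChasles (f : R -> R) a b c : ex_RInt f a b -> ex_RInt f b c ->
  RInt f a b + RInt f b c = RInt f a c.
Proof. exact (RInt_Chasles f a b c). Qed.

Lemma RInt_ext_open (f g : R -> R) a b :
  a <= b -> (forall y, a < y < b -> f y = g y) -> RInt f a b = RInt g a b.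
Proof. intros Hab H; apply RInt_ext; rewrite Rmin_left, Rmax_right; auto. Qed.

Lemma ex_RInt_ext_open (f g : R -> R) a b :
  a <= b -> (forall y, a < y < b -> f y = g y) -> ex_RInt f a b -> ex_RInt g a b.
Proof. intros Hab H; apply ex_RInt_ext; rewrite Rmin_left, Rmax_right; auto. Qed.

Lemma ex_RInt_sumR N (g : nat -> R -> R) a b :
  (forall m, ex_RInt (g m) a b) -> ex_RInt (fun y => sumR N (fun m => g m y)) a b.
Proof.
  intros H; induction N; simpl.
  - apply ex_RInt_const.
  - apply ex_RInt_Rplus; auto.
Qed.

Lemma RInt_sumR N (g : nat -> R -> R) a b : (forall m, ex_RInt (g m) a b) ->
  RInt (fun y => sumR N (fun m => g m y)) a b = sumR N (fun m => RInt (g m) a b).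
Proof.
  intros H; induction N; simpl.
  - rewrite RInt_Rconst; lra.
  - rewrite RInt_Rplus, IHN; auto using ex_RInt_sumR.
Qed.

Lemma RInt_le_const (f : R -> R) a b M : a <= b -> ex_RInt f a b ->
  (forall y, a < y < b -> f y <= M) -> RInt f a b <= M * (b - a).
Proof.
  intros Hab Hf HM. apply Rle_trans with (RInt (fun _ => M) a b).
  - apply RInt_le; auto using ex_RInt_const.
  - rewrite RInt_Rconst; lra.
Qed.

Lemma RInt_mono_domain (f : R -> R) a a' b' b :
  a <= a' -> a' <= b' -> b' <= b -> (forall s t, ex_RInt f s t) ->
  (forall y, 0 <= f y) -> RInt f a' b' <= RInt f a b.
Proof.
  intros H1 H2 H3 Hex Hpos.
  rewrite <- (RInt_RChasles f a a' b), <- (RInt_RChasles f a' b' b) by auto.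
  assert (0 <= RInt f a a') by (apply RInt_ge_0; auto).
  assert (0 <= RInt f b' b) by (apply RInt_ge_0; auto).
  lra.
Qed.

Definition clamp (a b t : R) : R := Rmax a (Rmin t b).

Ltac clamp_tac := unfold clamp, Rmax, Rmin in *; repeat destruct Rle_dec; lra.

Lemma RInt_clamp (g : R -> R) u v a b : u <= v -> a <= b ->
  (forall s t, ex_RInt g s t) -> (forall y, y < u \/ v <= y -> g y = 0) ->
  RInt g a b = RInt g (clamp a b u) (clamp a b v).
Proof.
  intros Huv Hab Hex Hz.
  assert (a <= clamp a b u <= clamp a b v /\ clamp a b v <= b) by clamp_tac.
  rewrite <- (RInt_RChasles g a (clamp a b u) b), <- (RInt_RChasles g (clamp a b u) (clamp a b v) b)
    by auto.
  rewrite (RInt_ext_open g (fun _ => 0) a (clamp a b u)),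
    (RInt_ext_open g (fun _ => 0) (clamp a b v) b), !RInt_Rconst; try lra;
    intros y Hy; apply Hz; clamp_tac.
Qed.

Lemma RInt_const_on (f : R -> R) v s t : s <= t -> (forall y, s < y < t -> f y = v) ->
  ex_RInt f s t /\ RInt f s t = (t - s) * v.
Proof.
  intros Hst H. split.
  - apply ex_RInt_ext_open with (fun _ => v); auto using ex_RInt_const.
    intros; symmetry; auto.
  - rewrite (RInt_ext_open f (fun _ => v)), RInt_Rconst; auto.
Qed.

Definition step (c y : R) : R := ind (c <= y).

Lemma RInt_step c a b : a <= b -> ex_RInt (step c) a b /\ RInt (step c) a b = b - clamp a b c.
Proof.
  intros Hab.
  destruct (RInt_const_on (step c) 0 a (clamp a b c)) as [E0 I0]; [clamp_tac| |].
  { intros y Hy; apply ind_false; clamp_tac. }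
  destruct (RInt_const_on (step c) 1 (clamp a b c) b) as [E1 I1]; [clamp_tac| |].
  { intros y Hy; apply ind_true; clamp_tac. }
  split; [apply (ex_RInt_Chasles _ _ (clamp a b c)); auto|].
  rewrite <- (RInt_RChasles _ a (clamp a b c) b), I0, I1; auto. lra.
Qed.

Lemma ex_RInt_step c a b : ex_RInt (step c) a b.
Proof.
  destruct (Rle_lt_dec a b).
  - apply RInt_step; auto.
  - apply ex_RInt_swap, RInt_step; lra.
Qed.

Lemma chi_step c d y : c <= d -> chi c d y = step c y - step d y.
Proof.
  intros H; unfold step; destruct (Rle_lt_dec c y), (Rle_lt_dec d y).
  - rewrite chi_out, !ind_true by lra. lra.
  - rewrite chi_in, ind_true, ind_false by lra. lra.
  - lra.
  - rewrite chi_out, !ind_false by lra. lra.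
Qed.

Lemma ex_RInt_chi c d a b : ex_RInt (chi c d) a b.
Proof.
  destruct (Rle_lt_dec c d).
  - apply ex_RInt_ext with (fun y => step c y - step d y).
    + intros; rewrite chi_step; auto.
    + apply ex_RInt_Rminus; apply ex_RInt_step.
  - apply ex_RInt_ext with (fun _ => 0); auto using ex_RInt_const.
    intros; rewrite chi_out; lra.
Qed.

Lemma RInt_chi c d a b : c <= d -> a <= b -> RInt (chi c d) a b = clamp a b d - clamp a b c.
Proof.
  intros Hcd Hab.
  rewrite (RInt_ext _ (fun y => step c y - step d y)) by (intros; apply chi_step; auto).
  rewrite RInt_Rminus by apply ex_RInt_step.
  rewrite (proj2 (RInt_step c a b Hab)), (proj2 (RInt_step d a b Hab)). lra.
Qed.

Lemma RInt_chi_within c d a b : a <= c <= d -> d <= b -> RInt (chi c d) a b = d - c.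
Proof. intros. rewrite RInt_chi by lra. clamp_tac. Qed.

Lemma RInt_chi_inside c d a b : c <= a <= b -> b <= d -> RInt (chi c d) a b = b - a.
Proof. intros. rewrite RInt_chi by lra. clamp_tac. Qed.

Lemma RInt_chi_nonneg c d a b : a <= b -> 0 <= RInt (chi c d) a b.
Proof. intros. apply RInt_ge_0; auto using ex_RInt_chi. intros; apply chi_bounds. Qed.

(** * The parameters eps, p and u *)

Lemma pow3_pos m : 0 < 3 ^ m.
Proof. apply pow_lt; lra. Qed.

Lemma pow3_ge_lin n : 2 * INR n + 1 <= 3 ^ n.
Proof. induction n; [simpl; lra|]. rewrite S_INR; simpl. pose proof (pos_INR n). lra. Qed.

Lemma eps_pos k : 0 < eps k.
Proof. apply Rinv_0_lt_compat, pow3_pos. Qed.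

Lemma eps_le_ninth k : (2 <= k)%nat -> eps k <= / 9.
Proof.
  intros H; apply Rinv_le_contravar; [lra|].
  replace 9 with (3 ^ 2) by (simpl; lra). apply Rle_pow; auto; lra.
Qed.

Lemma eps_mul_pow k : (1 <= k)%nat -> 3 * eps k * 3 ^ (k - 1) = 1.
Proof.
  intros H; unfold eps. replace k with (S (k - 1)) at 1 by lia. simpl.
  pose proof (pow3_pos (k - 1)). field. lra.
Qed.

Lemma pp_mul_eps k : pp k * (3 * eps k) = (1 + eps k) / 2 + 4 * eps k ^ 2 / (1 + eps k).
Proof. unfold pp. pose proof (eps_pos k). field. lra. Qed.

Lemma pp_lower k : (2 <= k)%nat -> (INR k + 1) / 2 <= pp k.
Proof.
  intros H. pose proof (eps_pos k).
  assert (Hk : 2 <= INR k) by (apply (le_INR 2); auto).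
  assert (Hpow : 2 * (INR k - 1) + 1 <= 3 ^ (k - 1))
    by (pose proof (pow3_ge_lin (k - 1)) as Hl; rewrite minus_INR in Hl by lia; simpl in Hl; lra).
  assert (0 <= 4 * eps k ^ 2 / (1 + eps k))
    by (apply Rmult_le_pos; [nra | left; apply Rinv_0_lt_compat; lra]).
  pose proof (pp_mul_eps k) as Hp. pose proof (eps_mul_pow k ltac:(lia)).
  assert (Hpe : pp k = 3 ^ (k - 1) * (pp k * (3 * eps k))) by nra.
  rewrite Hp in Hpe. nra.
Qed.

Lemma pp_ge_1 k : (2 <= k)%nat -> 1 <= pp k.
Proof. intros H. pose proof (pp_lower k H). pose proof (le_INR 2 k H). simpl in *. lra. Qed.

Lemma sqrt_pp_pos k : (2 <= k)%nat -> 0 < sqrt (pp k).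
Proof. intros H; apply sqrt_lt_R0; pose proof (pp_ge_1 k H); lra. Qed.

Lemma uu_pos k : (2 <= k)%nat -> 0 < uu k.
Proof. intros H; pose proof (sqrt_pp_pos k H); pose proof (sqrt_pos (pp k - 1)); unfold uu; lra. Qed.

Lemma uu_add_inv k : (2 <= k)%nat -> uu k + / uu k = 2 * sqrt (pp k).
Proof.
  intros H. pose proof (uu_pos k H). pose proof (pp_ge_1 k H).
  assert (Hinv : uu k * (sqrt (pp k) - sqrt (pp k - 1)) = 1).
  { unfold uu. replace ((sqrt (pp k) + sqrt (pp k - 1)) * (sqrt (pp k) - sqrt (pp k - 1)))
      with (sqrt (pp k) * sqrt (pp k) - sqrt (pp k - 1) * sqrt (pp k - 1)) by ring.
    rewrite !sqrt_sqrt; lra. }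
  replace (/ uu k) with (sqrt (pp k) - sqrt (pp k - 1)) by (field_simplify_eq; lra).
  unfold uu; lra.
Qed.

(* For I = [c,d): [tail_len c d m] = |I_m|, and I_m^(2) = [child_l c d m, child_r c d m). *)
Definition tail_len (c d : R) (m : nat) : R := (d - c) / 3 ^ m.

Definition child_l (c d : R) (m : nat) : R := d - 2 * tail_len c d (S m).
Definition child_r (c d : R) (m : nat) : R := d - tail_len c d (S m).

Lemma tail_len_S c d m : tail_len c d (S m) = tail_len c d m / 3.
Proof. unfold tail_len; simpl. pose proof (pow3_pos m). field. lra. Qed.

Lemma tail_len_pos c d m : c < d -> 0 < tail_len c d m.
Proof. intros; apply Rdiv_lt_0_compat; [lra | apply pow3_pos]. Qed.

Lemma tail_len_antimono c d i j : c < d -> (i <= j)%nat -> tail_len c d j <= tail_len c d i.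
Proof.
  intros. apply Rmult_le_compat_l; [lra|].
  apply Rinv_le_contravar; [apply pow3_pos | apply Rle_pow; auto; lra].
Qed.

Lemma tail_len_le c d m : c < d -> tail_len c d m <= d - c.
Proof.
  intros H. pose proof (tail_len_antimono c d 0 m H ltac:(lia)).
  replace (tail_len c d 0) with (d - c) in * by (unfold tail_len; simpl; lra). lra.
Qed.

Lemma tail_len_shift c d s m : tail_len (c + s) (d + s) m = tail_len c d m.
Proof. unfold tail_len; f_equal; ring. Qed.

Lemma tail_len_k k c d : tail_len c d k = eps k * (d - c).
Proof. unfold tail_len, eps, Rdiv; ring. Qed.

Lemma tail_len_pred k c d : (1 <= k)%nat -> tail_len c d (k - 1) = 3 * tail_len c d k.
Proof. intros. replace k with (S (k - 1)) at 2 by lia. rewrite tail_len_S. lra. Qed.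

Lemma tail_len_geometric c d N :
  sumR N (fun i => tail_len c d (S i)) = ((d - c) - tail_len c d N) / 2.
Proof.
  induction N; simpl sumR.
  - unfold tail_len; simpl; lra.
  - rewrite IHN, (tail_len_S c d N). lra.
Qed.

Lemma child_bounds c d m : c < d ->
  c + (d - c) / 3 <= child_l c d m /\ child_l c d m < child_r c d m /\ child_r c d m <= d.
Proof.
  intros H. unfold child_l, child_r. pose proof (tail_len_pos c d (S m) H).
  pose proof (tail_len_antimono c d 1 (S m) H ltac:(lia)).
  replace (tail_len c d 1) with ((d - c) / 3) in * by (unfold tail_len; simpl; lra). lra.
Qed.

Lemma child_in_band c d m y : c < d -> child_l c d m <= y < child_r c d m ->
  d - tail_len c d m <= y < d - tail_len c d (S m).
Proof.
  intros H Hy. unfold child_l, child_r in *. pose proof (tail_len_pos c d (S m) H).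
  rewrite tail_len_S in *. lra.
Qed.

Lemma bands_disjoint c d i j y : c < d ->
  d - tail_len c d i <= y < d - tail_len c d (S i) ->
  d - tail_len c d j <= y < d - tail_len c d (S j) -> i = j.
Proof.
  intros H Hi Hj. destruct (Nat.lt_total i j) as [l|[e|l]]; auto.
  - pose proof (tail_len_antimono c d (S i) j H l). lra.
  - pose proof (tail_len_antimono c d (S j) i H l). lra.
Qed.

Lemma third_l_1 m c d : third_l 1 (Im_left m c d) d = d - tail_len c d m.
Proof. unfold third_l, Im_left, tail_len; simpl INR. lra. Qed.

Lemma third_r_1 m c d : third_r 1 (Im_left m c d) d = child_l c d m.
Proof. unfold child_l; rewrite tail_len_S; unfold third_r, Im_left, tail_len; simpl INR. lra. Qed.

Lemma third_l_2 m c d : third_l 2 (Im_left m c d) d = child_l c d m.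
Proof. unfold child_l; rewrite tail_len_S; unfold third_l, Im_left, tail_len; simpl INR. lra. Qed.

Lemma third_r_2 m c d : third_r 2 (Im_left m c d) d = child_r c d m.
Proof. unfold child_r; rewrite tail_len_S; unfold third_r, Im_left, tail_len; simpl INR. lra. Qed.

Lemma third_l_3 m c d : third_l 3 (Im_left m c d) d = child_r c d m.
Proof. unfold child_r; rewrite tail_len_S; unfold third_l, Im_left, tail_len; simpl INR. lra. Qed.

Lemma third_r_3 m c d : third_r 3 (Im_left m c d) d = d.
Proof. unfold third_r, Im_left, tail_len; simpl INR. lra. Qed.

(* The first summand of w_(nu+1), with I_(k-1)^(1) and I_(k-1)^(2) split apart. *)
Definition own_part (k : nat) (om c d y : R) : R :=
  om / pp k *
    (sumR (k - 1) (fun m => chi (d - tail_len c d m) (child_l c d m) y)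
     + chi (d - tail_len c d (k - 1)) (child_l c d (k - 1)) y
     + chi (child_l c d (k - 1)) (child_r c d (k - 1)) y
     + 4 * eps k / (1 + eps k) * chi (child_r c d (k - 1)) d y).

Definition children_ind (k : nat) (c d y : R) : R :=
  sumR (k - 1) (fun m => chi (child_l c d m) (child_r c d m) y).

(** * The weights w_nu *)

Lemma wnu_S k nu om sg c d y : wnu k (S nu) om sg c d y =
  own_part k om c d y
  + sumR (k - 1) (fun m => wnu k nu (2 * om) (sg / 2) (child_l c d m) (child_r c d m) y).
Proof.
  cbn [wnu]. unfold own_part, chi_mi. f_equal.
  - rewrite ind_or_disjoint by (rewrite third_r_1, third_l_2; lra).
    rewrite !third_l_1, !third_r_1, !third_l_2, !third_r_2, !third_l_3, !third_r_3.
    rewrite (sumR_ext _ _ (fun m => chi (d - tail_len c d m) (child_l c d m) y))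
      by (intros; rewrite third_l_1, third_r_1; reflexivity).
    unfold chi; ring.
  - apply sumR_ext; intros; rewrite third_l_2, third_r_2; reflexivity.
Qed.

Lemma child_l_shift c d s m : child_l (c + s) (d + s) m = child_l c d m + s.
Proof. unfold child_l; rewrite tail_len_shift; ring. Qed.

Lemma child_r_shift c d s m : child_r (c + s) (d + s) m = child_r c d m + s.
Proof. unfold child_r; rewrite tail_len_shift; ring. Qed.

Lemma own_part_shift k om c d s y : own_part k om (c + s) (d + s) (y + s) = own_part k om c d y.
Proof.
  unfold own_part. rewrite !child_l_shift, !child_r_shift, !tail_len_shift.
  rewrite (sumR_ext _ _ (fun m => chi (d - tail_len c d m) (child_l c d m) y)).
  2:{ intros i _. rewrite child_l_shift, tail_len_shift.
      replace (d + s - tail_len c d i) with (d - tail_len c d i + s) by ring. apply chi_shift. }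
  replace (d + s - tail_len c d (k - 1)) with (d - tail_len c d (k - 1) + s) by ring.
  rewrite !chi_shift. reflexivity.
Qed.

Lemma wnu_shift k nu : forall om sg c d s y,
  wnu k nu om sg (c + s) (d + s) (y + s) = wnu k nu om sg c d y.
Proof.
  induction nu as [|nu IH]; intros.
  - cbn [wnu]. replace ((c + s + (d + s)) / 2) with ((c + d) / 2 + s) by field.
    rewrite !chi_shift. reflexivity.
  - rewrite !wnu_S, own_part_shift. f_equal. apply sumR_ext; intros.
    rewrite child_l_shift, child_r_shift. apply IH.
Qed.

(* Dispatch on the syntax of the integrand: a bare [apply ex_RInt_Rplus] on, say,
   [ex_RInt (chi c d) a b] makes unification unfold the definition of Rplus. *)
Ltac ex_RInt_tac :=
  repeat match goal with
  | |- ex_RInt (fun y => @?f y * @?g y) _ _ => apply ex_RInt_Rscal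
  | |- ex_RInt (fun y => @?f y + @?g y) _ _ => apply ex_RInt_Rplus
  | |- ex_RInt (fun y => sumR _ (@?g y)) _ _ => apply ex_RInt_sumR; intros
  | |- ex_RInt (fun y => chi _ _ y) _ _ => apply ex_RInt_chi
  | |- ex_RInt (chi _ _) _ _ => apply ex_RInt_chi
  | |- forall m, ex_RInt _ _ _ => intros
  end.

Section Weights.

Variable k : nat.
Hypothesis hk : (2 <= k)%nat.

Lemma own_part_nonneg om c d y : 0 <= om -> 0 <= own_part k om c d y.
Proof.
  intros Hom. pose proof (eps_pos k). pose proof (pp_ge_1 k hk). unfold own_part.
  apply Rmult_le_pos; [apply Rdiv_le_0_compat; lra|].
  pose proof (chi_bounds (d - tail_len c d (k - 1)) (child_l c d (k - 1)) y).
  pose proof (chi_bounds (child_l c d (k - 1)) (child_r c d (k - 1)) y).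
  pose proof (chi_bounds (child_r c d (k - 1)) d y).
  assert (0 <= 4 * eps k / (1 + eps k)) by (apply Rdiv_le_0_compat; lra).
  assert (0 <= sumR (k - 1) (fun m => chi (d - tail_len c d m) (child_l c d m) y))
    by (apply sumR_nonneg; intros; apply chi_bounds).
  nra.
Qed.

Lemma own_part_le om c d y : 0 <= om -> own_part k om c d y <= 2 * om.
Proof.
  intros Hom. pose proof (eps_pos k). pose proof (eps_le_ninth k hk).
  pose proof (pp_lower k hk). pose proof (pp_ge_1 k hk). unfold own_part.
  assert (Hsum : sumR (k - 1) (fun m => chi (d - tail_len c d m) (child_l c d m) y) <= INR k - 1).
  { apply Rle_trans with (sumR (k - 1) (fun _ => 1)).
    - apply sumR_le; intros; apply chi_bounds.
    - rewrite sumR_const, minus_INR by lia. simpl; lra. }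
  pose proof (chi_adjacent_le_1 (d - tail_len c d (k - 1)) (child_l c d (k - 1))
    (child_r c d (k - 1)) y).
  assert (Hb : 4 * eps k / (1 + eps k) <= 1)
    by (apply Rle_div_l; lra).
  assert (0 <= 4 * eps k / (1 + eps k)) by (apply Rdiv_le_0_compat; lra).
  pose proof (chi_bounds (child_r c d (k - 1)) d y).
  apply Rle_trans with (om / pp k * (INR k + 1)).
  - apply Rmult_le_compat_l; [apply Rdiv_le_0_compat; lra | nra].
  - replace (2 * om) with (om / pp k * (2 * pp k)) by (field; lra).
    apply Rmult_le_compat_l; [apply Rdiv_le_0_compat|]; lra.
Qed.

Lemma own_part_out om c d y : c < d -> ~ (c <= y < d) -> own_part k om c d y = 0.
Proof.
  intros H Hy. unfold own_part.
  pose proof (tail_len_le c d (k - 1) H). pose proof (child_bounds c d (k - 1) H).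
  rewrite sumR_zero; [rewrite !chi_out by lra; ring|].
  intros i _. pose proof (tail_len_le c d i H). pose proof (child_bounds c d i H).
  apply chi_out; lra.
Qed.

Lemma own_part_le_chi om c d y : c < d -> 0 <= om -> own_part k om c d y <= 2 * om * chi c d y.
Proof.
  intros H Hom. destruct (classic (c <= y < d)).
  - rewrite chi_in by auto. pose proof (own_part_le om c d y Hom). lra.
  - rewrite own_part_out, chi_out by auto. lra.
Qed.

Lemma own_part_on_child om c d m y : c < d -> (m < k - 1)%nat ->
  child_l c d m <= y < child_r c d m -> own_part k om c d y = 0.
Proof.
  intros H Hm Hy. pose proof (child_in_band c d m y H Hy) as Hb. unfold own_part.
  pose proof (tail_len_antimono c d (S m) (k - 1) H ltac:(lia)).
  pose proof (tail_len_pred k c d ltac:(lia)). pose proof (tail_len_pos c d k H).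
  pose proof (tail_len_S c d (k - 1)). unfold child_l, child_r in *.
  replace (S (k - 1)) with k in * by lia.
  rewrite sumR_zero; [rewrite !chi_out by lra; ring|].
  intros i Hi. apply chi_out. intros Hyi. destruct (Nat.eq_dec i m) as [->|ne]; [lra|].
  apply ne, (bands_disjoint c d i m y H); auto.
  pose proof (tail_len_pos c d (S i) H). rewrite tail_len_S in *. lra.
Qed.

Lemma children_ind_nonneg c d y : 0 <= children_ind k c d y.
Proof. apply sumR_nonneg; intros; apply chi_bounds. Qed.

Lemma children_ind_le_chi c d y : c < d -> children_ind k c d y <= chi c d y.
Proof.
  intros H. unfold children_ind.
  destruct (classic (exists m, (m < k - 1)%nat /\ child_l c d m <= y < child_r c d m))
    as [[m [Hm Hy]]|Hn].
  - pose proof (child_bounds c d m H).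
    rewrite (sumR_single _ _ m Hm), !chi_in by (lra || (intros i Hi Hne; apply chi_out;
      intros Hyi; apply Hne, (bands_disjoint c d i m y H); apply child_in_band; auto)).
    lra.
  - rewrite sumR_zero by (intros i Hi; apply chi_out; intros Hy; apply Hn; eauto).
    apply chi_bounds.
Qed.

Lemma own_part_le_children om c d y : c < d -> 0 <= om ->
  own_part k om c d y <= 2 * om * (chi c d y - children_ind k c d y).
Proof.
  intros H Hom. pose proof (children_ind_le_chi c d y H).
  destruct (classic (exists m, (m < k - 1)%nat /\ child_l c d m <= y < child_r c d m))
    as [[m [Hm Hy]]|Hn].
  - rewrite (own_part_on_child om c d m y) by auto. nra.
  - unfold children_ind; rewrite sumR_zero by (intros i Hi; apply chi_out; intros Hy; apply Hn; eauto).
    pose proof (own_part_le_chi om c d y H Hom). lra.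
Qed.

Lemma ex_RInt_own_part om c d a b : ex_RInt (own_part k om c d) a b.
Proof. unfold own_part. ex_RInt_tac. Qed.

(* [:> R] makes [field] see an equation in R rather than in Coquelicot's normed module. *)
Lemma RInt_own_part om c d :
  c < d -> RInt (own_part k om c d) c d = 3 * eps k * om * (d - c) :> R.
Proof.
  intros H. unfold own_part.
  rewrite RInt_Rscal, !RInt_Rplus, RInt_Rscal, RInt_sumR by ex_RInt_tac.
  rewrite (sumR_ext _ _ (fun i => tail_len c d (S i))).
  2:{ intros i Hi. pose proof (tail_len_le c d i H). pose proof (tail_len_pos c d (S i) H).
      pose proof (tail_len_S c d i). unfold child_l. rewrite RInt_chi_within; lra. }
  pose proof (eps_pos k). pose proof (pp_ge_1 k hk). pose proof (tail_len_pos c d k H).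
  pose proof (tail_len_le c d (k - 1) H). pose proof (tail_len_pred k c d ltac:(lia)).
  unfold child_l, child_r. replace (S (k - 1)) with k by lia.
  rewrite tail_len_geometric, !RInt_chi_within by lra.
  rewrite tail_len_pred, tail_len_k by lia.
  replace (3 * eps k * om * (d - c)) with (om / pp k * ((d - c) * (pp k * (3 * eps k))))
    by (field; lra).
  rewrite pp_mul_eps. field. lra.
Qed.

Lemma wnu_nonneg nu : forall om sg c d y, 0 <= om -> 0 <= wnu k nu om sg c d y.
Proof.
  induction nu as [|nu IH]; intros om sg c d y Hom.
  - pose proof (sqrt_pp_pos k hk). pose proof (uu_pos k hk).
    pose proof (chi_bounds c ((c + d) / 2) y). pose proof (chi_bounds ((c + d) / 2) d y).
    assert (0 < / uu k) by (apply Rinv_0_lt_compat; auto).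
    cbn [wnu]. apply Rmult_le_pos; [apply Rdiv_le_0_compat; lra | nra].
  - rewrite wnu_S. apply Rplus_le_le_0_compat; [apply own_part_nonneg; auto|].
    apply sumR_nonneg; intros; apply IH; lra.
Qed.

Lemma wnu_out nu : forall om sg c d y, c < d -> ~ (c <= y < d) -> wnu k nu om sg c d y = 0.
Proof.
  induction nu as [|nu IH]; intros om sg c d y H Hy.
  - cbn [wnu]. rewrite !chi_out by lra. ring.
  - rewrite wnu_S, own_part_out by auto.
    rewrite sumR_zero; [lra|].
    intros m _. pose proof (child_bounds c d m H). apply IH; lra.
Qed.

Lemma ex_RInt_wnu nu : forall om sg c d a b, ex_RInt (wnu k nu om sg c d) a b.
Proof.
  induction nu as [|nu IH]; intros.
  - cbn [wnu]. ex_RInt_tac.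
  - apply ex_RInt_ext with (fun y => own_part k om c d y + sumR (k - 1)
      (fun m => wnu k nu (2 * om) (sg / 2) (child_l c d m) (child_r c d m) y)).
    + intros; symmetry; apply wnu_S.
    + apply ex_RInt_Rplus; [apply ex_RInt_own_part | apply ex_RInt_sumR; auto].
Qed.

Lemma wnu_O_le om sg c d y : 0 <= om -> wnu k 0 om sg c d y <= 2 * om.
Proof.
  intros Hom. pose proof (sqrt_pp_pos k hk). pose proof (uu_pos k hk).
  assert (0 < / uu k) by (apply Rinv_0_lt_compat; auto).
  pose proof (chi_bounds c ((c + d) / 2) y). pose proof (chi_bounds ((c + d) / 2) d y).
  cbn [wnu]. replace (2 * om) with (om / sqrt (pp k) * (uu k + / uu k))
    by (rewrite uu_add_inv by auto; field; lra).
  apply Rmult_le_compat_l; [apply Rdiv_le_0_compat|]; nra.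
Qed.

Lemma wnu_O_le_chi om sg c d y : c < d -> 0 <= om -> wnu k 0 om sg c d y <= 2 * om * chi c d y.
Proof.
  intros H Hom. destruct (classic (c <= y < d)).
  - rewrite chi_in by auto. pose proof (wnu_O_le om sg c d y Hom). lra.
  - rewrite wnu_out, chi_out by auto. lra.
Qed.

Lemma wnu_le_first_third nu om sg c d y : c < d -> 0 <= om ->
  c <= y < c + (d - c) / 3 -> wnu k nu om sg c d y <= 2 * om.
Proof.
  intros H Hom Hy. destruct nu as [|nu]; [apply wnu_O_le; auto|].
  rewrite wnu_S, sumR_zero.
  - pose proof (own_part_le om c d y Hom). lra.
  - intros m _. pose proof (child_bounds c d m H). apply wnu_out; lra.
Qed.

Lemma RInt_wnu_S nu om sg c d a b : RInt (wnu k (S nu) om sg c d) a b =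
  RInt (own_part k om c d) a b
  + sumR (k - 1) (fun m => RInt (wnu k nu (2 * om) (sg / 2) (child_l c d m) (child_r c d m)) a b).
Proof.
  rewrite (RInt_ext _ (fun y => own_part k om c d y + sumR (k - 1)
    (fun m => wnu k nu (2 * om) (sg / 2) (child_l c d m) (child_r c d m) y)))
    by (intros; apply wnu_S).
  rewrite RInt_Rplus, RInt_sumR; auto using ex_RInt_own_part, ex_RInt_sumR, ex_RInt_wnu.
Qed.

Lemma RInt_wnu_clamp nu om sg c d a b : c < d -> a <= b ->
  RInt (wnu k nu om sg c d) a b = RInt (wnu k nu om sg c d) (clamp a b c) (clamp a b d).
Proof.
  intros H Hab. apply RInt_clamp; auto using ex_RInt_wnu; [lra|].
  intros y Hy; apply wnu_out; lra.
Qed.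

Lemma RInt_wnu_total nu :
  forall om sg c d, c < d -> RInt (wnu k nu om sg c d) c d = om * (d - c) :> R.
Proof.
  induction nu as [|nu IH]; intros om sg c d H.
  - cbn [wnu]. pose proof (sqrt_pp_pos k hk). pose proof (uu_pos k hk). pose proof (uu_add_inv k hk).
    rewrite RInt_Rscal, RInt_Rplus, !RInt_Rscal, !RInt_chi_within by (lra || ex_RInt_tac).
    replace (uu k * ((c + d) / 2 - c) + / uu k * (d - (c + d) / 2))
      with ((uu k + / uu k) * ((d - c) / 2)) by (field; lra).
    rewrite uu_add_inv by auto. field. lra.
  - rewrite RInt_wnu_S, RInt_own_part by auto.
    rewrite (sumR_ext _ _ (fun m => 2 * om * tail_len c d (S m))).
    + rewrite sumR_scal, tail_len_geometric, tail_len_pred, tail_len_k by lia.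
      unfold tail_len; simpl; lra.
    + intros m _. pose proof (child_bounds c d m H).
      rewrite RInt_wnu_clamp by lra.
      replace (clamp c d (child_l c d m)) with (child_l c d m) by clamp_tac.
      replace (clamp c d (child_r c d m)) with (child_r c d m) by clamp_tac.
      rewrite IH by lra. unfold child_l, child_r; lra.
Qed.

Lemma RInt_wnu_S_le nu om sg c d a b : c < d -> 0 <= om -> a <= b ->
  RInt (wnu k (S nu) om sg c d) a b <= 2 * om * RInt (chi c d) a b
  + sumR (k - 1) (fun m =>
      RInt (wnu k nu (2 * om) (sg / 2) (child_l c d m) (child_r c d m)) a b
      - 2 * om * RInt (chi (child_l c d m) (child_r c d m)) a b).
Proof.
  intros H Hom Hab. rewrite RInt_wnu_S, sumR_minus, sumR_scal.
  assert (Hex : ex_RInt (children_ind k c d) a b) by (unfold children_ind; ex_RInt_tac).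
  assert (Hown : RInt (own_part k om c d) a b
          <= RInt (fun y => 2 * om * (chi c d y - children_ind k c d y)) a b).
  { apply RInt_le; auto using ex_RInt_own_part, own_part_le_children.
    apply ex_RInt_Rscal, ex_RInt_Rminus; auto using ex_RInt_chi. }
  rewrite RInt_Rscal, RInt_Rminus in Hown by auto using ex_RInt_chi, ex_RInt_Rminus.
  unfold children_ind in Hown.
  rewrite (RInt_sumR _ (fun m => chi (child_l c d m) (child_r c d m))) in Hown
    by (intros; apply ex_RInt_chi).
  lra.
Qed.

Lemma RInt_wnu_left_edge nu om sg c d b : c < d -> 0 <= om -> c <= b <= d ->
  RInt (wnu k nu om sg c d) c b <= 3 * om * (b - c).
Proof.
  intros H Hom Hb. destruct (Rle_lt_dec b (c + (d - c) / 3)).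
  - apply Rle_trans with (2 * om * (b - c)); [|nra].
    apply RInt_le_const; auto using ex_RInt_wnu; [lra|].
    intros; apply wnu_le_first_third; auto; lra.
  - apply Rle_trans with (RInt (wnu k nu om sg c d) c d).
    + apply RInt_mono_domain; auto using ex_RInt_wnu, wnu_nonneg; lra.
    + rewrite RInt_wnu_total by auto. nra.
Qed.

Lemma RInt_wnu_right_edge nu : forall om sg c d a, c < d -> 0 <= om -> c <= a <= d ->
  RInt (wnu k nu om sg c d) a d <= 3 * om * (d - a).
Proof.
  induction nu as [|nu IH]; intros om sg c d a H Hom Ha.
  - apply Rle_trans with (2 * om * (d - a)); [|nra].
    apply RInt_le_const; auto using ex_RInt_wnu; [lra|].
    intros; apply wnu_O_le; auto.
  - eapply Rle_trans; [apply RInt_wnu_S_le; auto; lra|].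
    rewrite RInt_chi_inside by lra.
    assert (Hchild : forall m, (m < k - 1)%nat ->
      RInt (wnu k nu (2 * om) (sg / 2) (child_l c d m) (child_r c d m)) a d
      - 2 * om * RInt (chi (child_l c d m) (child_r c d m)) a d
      <= om * (d - a) * chi (child_l c d m) (child_r c d m) a).
    { intros m Hm. pose proof (child_bounds c d m H) as Hg.
      assert (Hlen : d - child_r c d m = child_r c d m - child_l c d m)
        by (unfold child_l, child_r; lra).
      set (u := child_l c d m) in *. set (v := child_r c d m) in *.
      pose proof (chi_bounds u v a).
      assert (0 <= om * (d - a) * chi u v a) by (apply Rmult_le_pos; nra).
      rewrite RInt_wnu_clamp, RInt_chi by lra.
      (* The part of the child right of [a] is bounded both by induction and by the child's
         total mass; since d - v = v - u, one of the two bounds suffices. *)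
      destruct (Rle_lt_dec a u); [|destruct (Rle_lt_dec v a)].
      - replace (clamp a d u) with u by clamp_tac. replace (clamp a d v) with v by clamp_tac.
        rewrite RInt_wnu_total by lra. lra.
      - replace (clamp a d u) with a by clamp_tac. replace (clamp a d v) with a by clamp_tac.
        rewrite RInt_Rpoint. lra.
      - replace (clamp a d u) with a by clamp_tac. replace (clamp a d v) with v by clamp_tac.
        rewrite chi_in by lra.
        pose proof (IH (2 * om) (sg / 2) u v a ltac:(lra) ltac:(lra) ltac:(lra)).
        assert (RInt (wnu k nu (2 * om) (sg / 2) u v) a v <= 2 * om * (v - u)).
        { rewrite <- (RInt_wnu_total nu (2 * om) (sg / 2) u v) by lra.
          apply RInt_mono_domain; auto using ex_RInt_wnu; try lra.
          intros; apply wnu_nonneg; lra. }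
        destruct (Rle_lt_dec (3 * (v - a)) (v - u)); nra. }
    apply Rle_trans with (2 * om * (d - a) + om * (d - a) * children_ind k c d a).
    + apply Rplus_le_compat_l. unfold children_ind. rewrite <- sumR_scal. apply sumR_le; auto.
    + pose proof (children_ind_le_chi c d a H). pose proof (children_ind_nonneg c d a).
      pose proof (chi_bounds c d a). assert (0 <= om * (d - a)) by nra. nra.
Qed.

Lemma RInt_wnu_edge nu om sg c d a b : c < d -> 0 <= om -> c <= a <= b -> b <= d ->
  a = c \/ b = d -> RInt (wnu k nu om sg c d) a b <= 3 * om * (b - a).
Proof.
  intros H Hom Ha Hb [->| ->].
  - apply RInt_wnu_left_edge; auto; lra.
  - apply RInt_wnu_right_edge; auto; lra.
Qed.

Lemma RInt_wnu_off_point nu om sg u v a b x : u < v -> 0 <= om -> a <= x < b ->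
  ~ (u <= x < v) -> RInt (wnu k nu om sg u v) a b <= 3 * om * RInt (chi u v) a b.
Proof.
  intros H Hom Hx Hxuv. rewrite RInt_wnu_clamp, RInt_chi by lra.
  destruct (Rlt_or_le x u); [destruct (Rle_lt_dec b u) | destruct (Rle_lt_dec v a)].
  - replace (clamp a b u) with b by clamp_tac. replace (clamp a b v) with b by clamp_tac.
    rewrite RInt_Rpoint. lra.
  - replace (clamp a b u) with u by clamp_tac.
    apply RInt_wnu_edge; auto; clamp_tac.
  - replace (clamp a b u) with a by clamp_tac. replace (clamp a b v) with a by clamp_tac.
    rewrite RInt_Rpoint. lra.
  - replace (clamp a b v) with v by clamp_tac.
    apply RInt_wnu_edge; auto; clamp_tac.
Qed.

Definition covered (depth : nat) (c d x : R) : Prop :=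
  exists c' d', descendant k depth c d c' d' /\ c' <= x < d'.

Lemma covered_child r c d m x : (m < k - 1)%nat ->
  covered r (child_l c d m) (child_r c d m) x -> covered (S r) c d x.
Proof.
  intros Hm [c' [d' [Hd Hx]]]. exists c', d'. split; auto.
  exists m. split; [lia|]. rewrite third_l_2, third_r_2. exact Hd.
Qed.

Lemma RInt_wnu_S_le_uniform nu om sg c d a b K : c < d -> 0 <= om -> a <= b -> 2 <= K ->
  (forall m, (m < k - 1)%nat ->
     RInt (wnu k nu (2 * om) (sg / 2) (child_l c d m) (child_r c d m)) a b
     <= K * om * RInt (chi (child_l c d m) (child_r c d m)) a b) ->
  RInt (wnu k (S nu) om sg c d) a b <= K * om * RInt (chi c d) a b.
Proof.
  intros H Hom Hab HK Hchild.
  eapply Rle_trans; [apply RInt_wnu_S_le; auto|].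
  apply Rle_trans with (2 * om * RInt (chi c d) a b
    + (K - 2) * om * RInt (children_ind k c d) a b).
  - apply Rplus_le_compat_l. unfold children_ind.
    rewrite (RInt_sumR _ (fun m => chi (child_l c d m) (child_r c d m)))
      by (intros; apply ex_RInt_chi).
    rewrite <- sumR_scal. apply sumR_le. intros m Hm. specialize (Hchild m Hm). nra.
  - assert (RInt (children_ind k c d) a b <= RInt (chi c d) a b).
    { apply RInt_le; auto using ex_RInt_chi; [|intros; apply children_ind_le_chi; lra].
      unfold children_ind; ex_RInt_tac. }
    pose proof (RInt_chi_nonneg c d a b Hab).
    assert (0 <= (K - 2) * om) by nra. nra.
Qed.

(* [r] is the number of generations of carrying intervals below [c,d) containing [x]
   (possibly all [nu] of them). *)
Lemma RInt_wnu_le_pow nu : forall om sg c d a b x r, 0 <= om -> c <= x < d -> a <= x < b ->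
  (r <= nu)%nat -> (r = nu \/ ~ covered (S r) c d x) ->
  RInt (wnu k nu om sg c d) a b <= 9 * om * 2 ^ r * RInt (chi c d) a b.
Proof.
  induction nu as [|nu IH]; intros om sg c d a b x r Hom Hx Hab Hr Hcov.
  - replace r with 0%nat by lia. pose proof (RInt_chi_nonneg c d a b ltac:(lra)).
    apply Rle_trans with (RInt (fun y => 2 * om * chi c d y) a b).
    + apply RInt_le; auto using ex_RInt_wnu; try lra.
      * apply ex_RInt_Rscal, ex_RInt_chi.
      * intros; apply wnu_O_le_chi; auto; lra.
    + rewrite RInt_Rscal by apply ex_RInt_chi. simpl; nra.
  - assert (Hpow : 1 <= 2 ^ r) by (apply pow_R1_Rle; lra).
    replace (9 * om * 2 ^ r) with (9 * 2 ^ r * om) by ring.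
    assert (Hchild : forall m, (m < k - 1)%nat ->
      RInt (wnu k nu (2 * om) (sg / 2) (child_l c d m) (child_r c d m)) a b
      <= 9 * 2 ^ r * om * RInt (chi (child_l c d m) (child_r c d m)) a b).
    { intros m Hm. pose proof (child_bounds c d m ltac:(lra)).
      pose proof (RInt_chi_nonneg (child_l c d m) (child_r c d m) a b ltac:(lra)) as Hchi.
      destruct (classic (child_l c d m <= x < child_r c d m)) as [Hin|Hout].
      - destruct r as [|r].
        + exfalso. destruct Hcov as [Hcov|Hcov]; [lia|].
          apply Hcov, (covered_child 0 c d m); auto. exists (child_l c d m), (child_r c d m).
          repeat split; auto; lra.
        + replace (9 * 2 ^ S r * om) with (9 * (2 * om) * 2 ^ r) by (simpl; ring).
          apply (IH _ _ _ _ _ _ x); auto; try lra; try lia.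
          destruct Hcov as [Hcov|Hcov]; [left; lia|right].
          intros Hc; apply Hcov, (covered_child (S r) c d m); auto.
      - eapply Rle_trans; [apply (RInt_wnu_off_point _ _ _ _ _ _ _ x); auto; lra|].
        pose proof (Rmult_le_pos _ _ Hom Hchi). nra. }
    apply RInt_wnu_S_le_uniform; auto; lra.
Qed.

End Weights.

(** * The periodic weight w *)

Section IntegerCells.

Variable f : R -> R.
Variable C : R.
Hypothesis ex_RInt_cell : forall (i : Z) s t,
  IZR i <= s <= t -> t <= IZR i + 1 -> ex_RInt f s t.
Hypothesis RInt_cell_edge : forall (i : Z) s t,
  IZR i <= s <= t -> t <= IZR i + 1 -> s = IZR i \/ t = IZR i + 1 -> RInt f s t <= C * (t - s).

Lemma RInt_le_left_of_integer a (j : Z) :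
  a <= IZR j -> ex_RInt f a (IZR j) /\ RInt f a (IZR j) <= C * (IZR j - a).
Proof.
  intros Ha. destruct (INR_unbounded (IZR j - a)) as [N HN]. revert a j Ha HN.
  induction N as [|N IH]; intros a j Ha HN; [simpl in HN; lra|]. rewrite S_INR in HN.
  assert (Hj : IZR (j - 1) = IZR j - 1) by (rewrite minus_IZR; reflexivity).
  destruct (Rle_lt_dec (IZR j - 1) a).
  - split; [apply (ex_RInt_cell (j - 1)) | apply (RInt_cell_edge (j - 1))]; lra.
  - destruct (IH a (j - 1)%Z) as [Ex Le]; try lra.
    assert (Ex1 : ex_RInt f (IZR (j - 1)) (IZR j)) by (apply (ex_RInt_cell (j - 1)); lra).
    assert (Le1 : RInt f (IZR (j - 1)) (IZR j) <= C * (IZR j - IZR (j - 1)))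
      by (apply (RInt_cell_edge (j - 1)); lra).
    split; [apply (ex_RInt_Chasles _ _ (IZR (j - 1))); auto|].
    rewrite <- (RInt_RChasles _ a (IZR (j - 1))) by auto. lra.
Qed.

Lemma RInt_le_right_of_integer (j : Z) b :
  IZR j <= b -> ex_RInt f (IZR j) b /\ RInt f (IZR j) b <= C * (b - IZR j).
Proof.
  intros Hb. destruct (INR_unbounded (b - IZR j)) as [N HN]. revert b j Hb HN.
  induction N as [|N IH]; intros b j Hb HN; [simpl in HN; lra|]. rewrite S_INR in HN.
  assert (Hj : IZR (j + 1) = IZR j + 1) by (rewrite plus_IZR; reflexivity).
  destruct (Rle_lt_dec b (IZR j + 1)).
  - split; [apply (ex_RInt_cell j) | apply (RInt_cell_edge j)]; lra.
  - destruct (IH b (j + 1)%Z) as [Ex Le]; try lra.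
    assert (Ex1 : ex_RInt f (IZR j) (IZR (j + 1))) by (apply (ex_RInt_cell j); lra).
    assert (Le1 : RInt f (IZR j) (IZR (j + 1)) <= C * (IZR (j + 1) - IZR j))
      by (apply (RInt_cell_edge j); lra).
    split; [apply (ex_RInt_Chasles _ _ (IZR (j + 1))); auto|].
    rewrite <- (RInt_RChasles _ (IZR j) (IZR (j + 1))) by auto. lra.
Qed.

End IntegerCells.

Lemma frac_part_on_cell (j : Z) y : IZR j <= y < IZR j + 1 -> frac_part y = y - IZR j.
Proof.
  intros H. unfold frac_part, Int_part.
  replace (up y) with (j + 1)%Z by (apply tech_up; rewrite plus_IZR; simpl; lra).
  replace (j + 1 - 1)%Z with j by lia. reflexivity.
Qed.

Lemma abs_w_on_cell k (j : Z) y : (2 <= k)%nat -> IZR j <= y < IZR j + 1 ->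
  Rabs (w k y) = wnu k (nn k) 1 (pp k) (IZR j) (IZR j + 1) y.
Proof.
  intros hk Hy. unfold w. rewrite (frac_part_on_cell j) by auto.
  rewrite <- (wnu_shift k _ _ _ 0 1 (IZR j) (y - IZR j)), Rplus_0_l.
  replace (y - IZR j + IZR j) with y by ring. rewrite (Rplus_comm 1).
  apply Rabs_right, Rle_ge, wnu_nonneg; auto; lra.
Qed.

Lemma RInt_abs_w_cell k (j : Z) s t : (2 <= k)%nat -> IZR j <= s <= t -> t <= IZR j + 1 ->
  ex_RInt (fun y => Rabs (w k y)) s t
  /\ RInt (fun y => Rabs (w k y)) s t = RInt (wnu k (nn k) 1 (pp k) (IZR j) (IZR j + 1)) s t.
Proof.
  intros hk Hs Ht.
  assert (Heq : forall y, s < y < t -> wnu k (nn k) 1 (pp k) (IZR j) (IZR j + 1) y = Rabs (w k y))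
    by (intros; symmetry; apply abs_w_on_cell; auto; lra).
  split.
  - apply (ex_RInt_ext_open _ _ _ _ (proj2 Hs) Heq), ex_RInt_wnu; auto.
  - symmetry; apply RInt_ext_open; auto; lra.
Qed.

Lemma RInt_abs_w_cell_edge k (j : Z) s t : (2 <= k)%nat -> IZR j <= s <= t -> t <= IZR j + 1 ->
  s = IZR j \/ t = IZR j + 1 -> RInt (fun y => Rabs (w k y)) s t <= 3 * (t - s).
Proof.
  intros hk Hs Ht Hedge. rewrite (proj2 (RInt_abs_w_cell k j s t hk Hs Ht)).
  replace (3 * (t - s)) with (3 * 1 * (t - s)) by ring.
  apply RInt_wnu_edge; auto; lra.
Qed.

Lemma RInt_abs_w_le_pow k (j : Z) r a b x : (2 <= k)%nat ->
  IZR j <= x < IZR j + 1 -> a <= x < b -> (r <= nn k)%nat ->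
  (r = nn k \/ ~ covered k (S r) (IZR j) (IZR j + 1) x) ->
  RInt (fun y => Rabs (w k y)) a b <= 9 * 2 ^ r * (b - a).
Proof.
  intros hk Hj Hx Hr Hcov. pose (F := fun y => Rabs (w k y)).
  set (a0 := Rmax a (IZR j)). set (b0 := Rmin b (IZR j + 1)).
  assert (Ha0 : a <= a0 /\ IZR j <= a0 <= x) by (unfold a0, Rmax; destruct Rle_dec; lra).
  assert (Hb0 : x < b0 <= b /\ b0 <= IZR j + 1) by (unfold b0, Rmin; destruct Rle_dec; lra).
  assert (Hleft : ex_RInt F a a0 /\ RInt F a a0 <= 3 * (a0 - a)).
  { destruct (Rle_lt_dec a (IZR j)).
    - replace a0 with (IZR j) by (unfold a0, Rmax; destruct Rle_dec; lra).
      apply RInt_le_left_of_integer; auto; intros; unfold F;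
        [apply (RInt_abs_w_cell k i) | apply (RInt_abs_w_cell_edge k i)]; auto.
    - replace a0 with a by (unfold a0, Rmax; destruct Rle_dec; lra).
      split; [apply ex_RInt_point | rewrite RInt_Rpoint; lra]. }
  assert (Hright : ex_RInt F b0 b /\ RInt F b0 b <= 3 * (b - b0)).
  { destruct (Rle_lt_dec (IZR j + 1) b).
    - replace b0 with (IZR (j + 1)) by (rewrite plus_IZR; unfold b0, Rmin; destruct Rle_dec; lra).
      apply RInt_le_right_of_integer; [intros; unfold F..|rewrite plus_IZR; lra];
        [apply (RInt_abs_w_cell k i) | apply (RInt_abs_w_cell_edge k i)]; auto.
    - replace b0 with b by (unfold b0, Rmin; destruct Rle_dec; lra).
      split; [apply ex_RInt_point | rewrite RInt_Rpoint; lra]. }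
  destruct (RInt_abs_w_cell k j a0 b0) as [Hex Heq]; auto; try lra.
  fold F in Hex, Heq.
  assert (Hmid : RInt F a0 b0 <= 9 * 2 ^ r * (b0 - a0)).
  { rewrite Heq.
    rewrite <- (RInt_chi_inside (IZR j) (IZR j + 1) a0 b0), <- (Rmult_1_r 9) by lra.
    apply (RInt_wnu_le_pow k hk _ _ _ _ _ _ _ x); auto; lra. }
  destruct Hleft as [ExL HL], Hright as [ExR HR]. fold F.
  assert (ex_RInt F a0 b) by (apply (ex_RInt_Chasles _ _ b0); auto).
  rewrite <- (RInt_RChasles F a a0 b), <- (RInt_RChasles F a0 b0 b) by auto.
  assert (Hpow : 1 <= 2 ^ r) by (apply pow_R1_Rle; lra).
  nra.
Qed.

Lemma in_supp_of_covered k nu (j : Z) x : (nu <= nn k)%nat ->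
  covered k (nn k - nu) (IZR j) (IZR j + 1) x -> in_supp k nu x.
Proof.
  intros Hnu [c [d [Hd Hx]]]. exists c, d. split; auto. split; auto. exists j; exact Hd.
Qed.

Lemma wtilde_ge_pow k x nu : (nu <= nn k)%nat -> in_supp k nu x ->
  (forall mu, (mu < nu)%nat -> ~ in_supp k mu x) -> 2 ^ S (nn k - nu) <= wtilde k x.
Proof.
  intros Hnu Hin Hmin. unfold wtilde.
  set (term := fun l' : nat => let l := S l' in
    2 ^ l * ind (in_supp k (nn k - (l - 1)) x /\ ~ in_supp k (nn k - l) x)).
  assert (Hterm : forall i, (i < nn k)%nat -> 0 <= term i).
  { intros i _. apply Rmult_le_pos; [apply pow_le; lra | apply ind_bounds]. }
  assert (0 <= 2 ^ S (nn k) * ind (in_supp k 0 x))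
    by (apply Rmult_le_pos; [apply pow_le; lra | apply ind_bounds]).
  pose proof (sumR_nonneg _ _ Hterm).
  destruct nu as [|mu].
  - rewrite Nat.sub_0_r, (ind_true (in_supp k 0 x)) by auto. lra.
  - pose proof (sumR_ge_term _ _ (nn k - S mu) Hterm ltac:(lia)) as Hge.
    unfold term at 1 in Hge; cbv zeta in Hge.
    replace (nn k - (S (nn k - S mu) - 1))%nat with (S mu) in Hge by lia.
    replace (nn k - S (nn k - S mu))%nat with mu in Hge by lia.
    rewrite ind_true in Hge by (split; auto). lra.
Qed.

Theorem proposition3 (k : nat) (hk : (2 <= k)%nat) (x : R) :
  forall (a b : R), a <= x < b ->
  forall pr : Riemann_integrable (fun t => Rabs (w k t)) a b,
    RiemannInt pr / (b - a) <= 9 / 2 * wtilde k x.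
Proof.
  intros a b Hx pr. set (j := Int_part x). destruct (base_Int_part x) as [Hj1 Hj2].
  assert (Hcell : IZR j <= x < IZR j + 1) by (unfold j; lra).
  assert (Hfull : in_supp k (nn k) x).
  { apply (in_supp_of_covered k _ j); auto. rewrite Nat.sub_diag.
    exists (IZR j), (IZR j + 1). split; [split|]; auto. }
  destruct (Wf_nat.dec_inh_nat_subset_has_unique_least_element (fun nu => in_supp k nu x))
    as [nu [[Hnu Hleast] _]]; eauto using classic.
  assert (Hle : (nu <= nn k)%nat) by auto.
  assert (Hmin : forall mu, (mu < nu)%nat -> ~ in_supp k mu x)
    by (intros mu Hmu Hs; specialize (Hleast mu Hs); lia).
  assert (Hint : RInt (fun y => Rabs (w k y)) a b <= 9 * 2 ^ (nn k - nu) * (b - a)).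
  { apply (RInt_abs_w_le_pow k j _ _ _ x); auto; [lia|].
    destruct nu as [|mu]; [left; lia|right].
    intros Hc. apply (Hmin mu); [lia|]. apply (in_supp_of_covered k mu j); [lia|].
    replace (nn k - mu)%nat with (S (nn k - S mu)) by lia. exact Hc. }
  pose proof (wtilde_ge_pow k x nu Hle Hnu Hmin). simpl pow in *.
  rewrite <- RInt_Reals. apply Rle_div_l; [lra|]. nra.
Qed.
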